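(* Let $n\ge3$ and $(x,y)\in\mathbb{C}^n\times\mathbb{C}^{n-1}$. The following are equivalent: (i) $(x,y)\in\mathbb{G}_{1,n}$; (ii) for each $\xi\in\overline{\mathbb{D}}$, the point $(\widetilde{x}(\xi),\widetilde{y}(\xi))\in\mathbb{C}^{n-1}\times\mathbb{C}^{n-2}$ belongs to $\mathbb{G}_{1,n-1}$, where \[ \widetilde{x}_j(\xi):=\frac{(n-j)x_j-j\xi x_{j+1}}{(n-1)-\xi y_1},\ j=1,\dots,n-1,\qquad \widetilde{y}_j(\xi):=\frac{(n-1-j)y_j-(j+1)\xi y_{j+1}}{(n-1)-\xi y_1},\ j=1,\dots,n-2 \] (part of the assertion (ii) being that the denominators $(n-1)-\xi y_1$ are nonzero for $\xi\in\overline{\mathbb{D}}$).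
   Context: $\mathbb{D}$ is the open unit disc. For $N\ge2$ and $(x,y)\in\mathbb{C}^N\times\mathbb{C}^{N-1}$: $P_N(z;x):=\sum_{j=0}^{N-1}(-1)^jx_{j+1}z^j$, $Q_N(z;y):=1+\sum_{j=1}^{N-1}(-1)^jy_jz^j$, and $\mathbb{G}_{1,N}:=\{(x,y): \text{the zero set of }(z,w)\mapsto Q_N(z;y)-wP_N(z;x)\text{ in }\mathbb{C}^2\text{ does not meet }\overline{\mathbb{D}}^2\}$. *)

(* Complex numbers: an arbitrary numClosedFieldType C
   (algebraically closed field with its modulus `|_|; e.g. the complex numbers). *)
From HB Require Import structures.
From mathcomp Require Import all_boot all_order all_algebra.
Set Implicit Arguments. Unset Strict Implicit. Unset Printing Implicit Defensive.
Import Order.TTheory GRing.Theory Num.Theory.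
Local Open Scope ring_scope.

(* 1-indexed access to a vector v : 'I_N -> C : coord1 v j = v_j for 1 <= j <= N
   (and 0 out of range; only used in range). *)
Definition coord1 (C : numClosedFieldType) (N : nat) (v : 'I_N -> C) (j : nat) : C :=
  match @insub nat (fun k => k < N)%N _ j.-1 with
  | Some i => v i
  | None => 0
  end.

Definition PN (C : numClosedFieldType) (N : nat) (x : 'I_N -> C) (z : C) : C :=
  \sum_(j < N) (-1) ^+ j * coord1 x j.+1 * z ^+ j.

Definition QN (C : numClosedFieldType) (N : nat) (y : 'I_N.-1 -> C) (z : C) : C :=
  1 + \sum_(1 <= j < N) (-1) ^+ j * coord1 y j * z ^+ j.

Definition G1 (C : numClosedFieldType) (N : nat) (x : 'I_N -> C) (y : 'I_N.-1 -> C) : Prop :=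
  forall z w : C, `|z| <= 1 -> `|w| <= 1 -> QN y z - w * PN x z != 0.

Definition xtilde (C : numClosedFieldType) (n : nat) (x : 'I_n -> C) (y : 'I_n.-1 -> C)
  (xi : C) : 'I_n.-1 -> C :=
  fun i => let j := (nat_of_ord i).+1 in
    ((n - j)%:R * coord1 x j - j%:R * xi * coord1 x j.+1) / ((n.-1)%:R - xi * coord1 y 1).

Definition ytilde (C : numClosedFieldType) (n : nat) (y : 'I_n.-1 -> C)
  (xi : C) : 'I_n.-1.-1 -> C :=
  fun i => let j := (nat_of_ord i).+1 in
    ((n.-1 - j)%:R * coord1 y j - j.+1%:R * xi * coord1 y j.+1) / ((n.-1)%:R - xi * coord1 y 1).

(* The polynomial p_w(z) := Q_n(z;y) - w P_n(z;x) has degree at most n-1, and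
   comparing coefficients shows that its polar derivative
   (n-1) p_w(z) + (xi - z) p_w'(z) with pole xi equals ((n-1) - xi y_1) times
   the polynomial built in the same way from (xtilde(xi), ytilde(xi)).  By
   Laguerre's theorem, a polar derivative with pole in the closed disc of a
   polynomial without zeros in the closed disc has no zeros there either; at
   z = w = 0 this gives the nonvanishing of the denominators.  Conversely, the
   pole xi := z turns the polar derivative at z into (n-1) p_w(z).

   For Laguerre's theorem put E(z, t) := |z t - 1|^2 - |t|^2, which for t != 0
   is positive exactly when z - 1/t lies outside the closed disc.  For |z| <= 1,
   E(z, .) dominates its convex combinations, and p'(z) / (m p(z)) is a convex
   combination of 0 and the 1/(z - r) over the roots r, at each of which E > 0.
   So the pole z - m p(z) / p'(z) of a polar derivative vanishing at z lies
   outside the closed disc. *)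
From HB Require Import structures.
From mathcomp Require Import all_boot all_order all_algebra.
From mathcomp Require Import ring.
Set Implicit Arguments. Unset Strict Implicit. Unset Printing Implicit Defensive.
Import Order.TTheory GRing.Theory Num.Theory.
Local Open Scope ring_scope.

Section PolarDerivative.
Variable C : numClosedFieldType.
Implicit Types (a b t u v z xi : C) (p q : {poly C}).

Definition polar_excess z t := `|z * t - 1| ^+ 2 - `|t| ^+ 2.

Lemma sqr_norm_affine a b u v : a^* = a -> b^* = b -> a + b = 1 ->
  `|a * u + b * v| ^+ 2 = a * `|u| ^+ 2 + b * `|v| ^+ 2 - a * b * `|u - v| ^+ 2.
Proof.
move=> ra rb ab1; rewrite !normCK !(rmorphD, rmorphM, rmorphN, rmorphB) /= ra rb.
have -> : b = 1 - a by rewrite -ab1 addrC addKr.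
ring.
Qed.

Lemma polar_excess_affine z a b u v : a^* = a -> b^* = b -> a + b = 1 ->
  polar_excess z (a * u + b * v) =
  a * polar_excess z u + b * polar_excess z v
  + a * b * (1 - `|z| ^+ 2) * `|u - v| ^+ 2.
Proof.
move=> ra rb ab1; rewrite /polar_excess.
have -> : z * (a * u + b * v) - 1 = a * (z * u - 1) + b * (z * v - 1).
  by rewrite -[1 in LHS]mulr1 -ab1; ring.
rewrite !sqr_norm_affine //.
have -> : z * u - 1 - (z * v - 1) = z * (u - v) by ring.
rewrite normrM exprMn; ring.
Qed.

Lemma polar_excess_inv z xi : z != xi ->
  polar_excess z (1 / (z - xi)) = (`|xi| ^+ 2 - 1) * `|1 / (z - xi)| ^+ 2.
Proof.
move=> zxi; rewrite /polar_excess.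
have zxi0 : z - xi != 0 by rewrite subr_eq0.
have -> : z * (1 / (z - xi)) - 1 = xi * (1 / (z - xi)) by field.
rewrite normrM exprMn; ring.
Qed.

Lemma polar_excess0 z : polar_excess z 0 = 1.
Proof. by rewrite /polar_excess mulr0 sub0r normrN normr1 normr0 expr1n expr0n subr0. Qed.

Lemma conjC_ratio (i j : nat) : (i%:R / j%:R : C)^* = i%:R / j%:R.
Proof. by rewrite fmorph_div /= !conjC_nat. Qed.

Lemma logderiv_mulXsubC q r z (m : nat) : ((size q).-1 <= m)%N ->
  q.[z] != 0 -> z != r ->
  (q * ('X - r%:P))^`().[z] / (m.+1%:R * (q * ('X - r%:P)).[z]) =
  m%:R / m.+1%:R * (q^`().[z] / (m%:R * q.[z])) + 1 / m.+1%:R * (1 / (z - r)).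
Proof.
move=> szq qz0 zr.
have zr0 : z - r != 0 by rewrite subr_eq0.
have m1 : (m.+1%:R : C) != 0 by rewrite pnatr_eq0.
rewrite derivM derivXsubC mulr1 hornerD !hornerM !hornerXsubC.
have [m0|m0] := eqVneq m 0%N.
  have /size1_polyC Dq : (size q <= 1)%N by move: szq; rewrite m0; case: (size q).
  rewrite Dq derivC -Dq horner0 m0 !mul0r !add0r.
  by field; rewrite zr0 qz0.
have m0' : (m%:R : C) != 0 by rewrite pnatr_eq0.
by field; rewrite zr0 qz0 m0' addrC natr1 m1.
Qed.

Lemma polar_excess_logderiv_gt0 z p (m : nat) : `|z| <= 1 ->
  ((size p).-1 <= m)%N -> (forall u, `|u| <= 1 -> p.[u] != 0) ->
  0 < polar_excess z (p^`().[z] / (m%:R * p.[z])).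
Proof.
move=> z1; elim: m p => [|m IH] p szp p0.
  (* division by [0%:R] yields 0 *)
  by rewrite mul0r invr0 mulr0 polar_excess0 ltr01.
have [szp1|szp1] := leqP (size p) 1.
  by rewrite (size1_polyC szp1) derivC horner0 mul0r polar_excess0 ltr01.
have /closed_rootP [r pr] : size p != 1 by rewrite neq_ltn szp1 orbT.
have /factor_theorem [q Dp] := pr.
have r1 : 1 < `|r|.
  rewrite real_ltNge ?real1 ?normr_real //; apply/negP => r1.
  by move: (p0 r r1); rewrite (rootP pr) eqxx.
have zr : z != r by apply: contraTneq r1 => <-; rewrite real_ltNge ?real1 ?normr_real ?z1.
have q0 u : `|u| <= 1 -> q.[u] != 0.
  by move=> u1; apply: contraNneq (p0 u u1); rewrite Dp hornerM => ->; rewrite mul0r.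
have q_ne0 : q != 0 by apply: contraTneq szp1 => q00; rewrite Dp q00 mul0r size_poly0.
have szq : ((size q).-1 <= m)%N.
  by move: szp; rewrite Dp size_Mmonic ?monicXsubC // size_XsubC addn2 /=; case: (size q).
rewrite Dp logderiv_mulXsubC ?q0 //.
rewrite polar_excess_affine; first last.
- by rewrite -mulrDl natr1 divff ?pnatr_eq0.
- by rewrite -[1 in LHS](mulr1n 1) conjC_ratio.
- by rewrite conjC_ratio.
have a0 : (0 : C) <= m%:R / m.+1%:R by rewrite divr_ge0 ?ler0n.
have b0 : (0 : C) < 1 / m.+1%:R by rewrite divr_gt0 ?ltr0n.
apply: ltr_wpDr.
  by rewrite mulr_ge0 ?exprn_ge0 // mulr_ge0 ?(mulr_ge0 a0 (ltW b0)) // subr_ge0 exprn_ile1.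
apply: ltr_wpDl; first by rewrite mulr_ge0 ?(ltW (IH q szq q0)).
rewrite mulr_gt0 // polar_excess_inv // mulr_gt0 //.
  by rewrite subr_gt0 -(expr1n _ 2%N) ltrXn2r // ?nnegrE.
by rewrite exprn_gt0 // normr_gt0 div1r invr_eq0 subr_eq0.
Qed.

Lemma polar_derivative_neq0 p (m : nat) : ((size p).-1 <= m)%N -> (0 < m)%N ->
  (forall u, `|u| <= 1 -> p.[u] != 0) -> forall z xi, `|z| <= 1 -> `|xi| <= 1 ->
  m%:R * p.[z] + (xi - z) * p^`().[z] != 0.
Proof.
move=> szp m0 p0 z xi z1 xi1; apply/eqP => E.
have pz0 := p0 z z1.
have m0' : (m%:R : C) != 0 by rewrite pnatr_eq0 -lt0n.
have [xiz|xiz] := eqVneq xi z.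
  by move: E; rewrite xiz subrr mul0r addr0 => /eqP; rewrite mulf_eq0 (negPf m0') (negPf pz0).
have zxi0 : z - xi != 0 by rewrite subr_eq0 eq_sym.
have E' : p^`().[z] * (z - xi) = m%:R * p.[z].
  by move/eqP: E; rewrite addr_eq0 => /eqP ->; rewrite -opprB mulrN mulrC.
have dpz0 : p^`().[z] != 0.
  by apply: contraNneq (mulf_neq0 m0' pz0) => dp0; rewrite -E' dp0 mul0r.
have pole : p^`().[z] / (m%:R * p.[z]) = 1 / (z - xi).
  by rewrite -E'; field; rewrite zxi0 dpz0.
have excess_le0 : polar_excess z (1 / (z - xi)) <= 0.
  by rewrite polar_excess_inv 1?eq_sym // mulr_le0_ge0 ?exprn_ge0 // subr_le0 exprn_ile1.
have := polar_excess_logderiv_gt0 z1 szp p0.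
by rewrite pole => /lt_le_trans/(_ excess_le0); rewrite ltxx.
Qed.

Lemma coord1_ord N (v : 'I_N -> C) j (lt_jN : (j < N)%N) :
  coord1 v j.+1 = v (Ordinal lt_jN).
Proof. by rewrite /coord1 /= insubT /=; congr v; apply: val_inj. Qed.

Definition qcoef M (y : 'I_M -> C) (j : nat) : C := if j == 0%N then 1 else coord1 y j.

Definition pencil N (x : 'I_N -> C) (y : 'I_N.-1 -> C) (w : C) : {poly C} :=
  \poly_(j < N) ((-1) ^+ j * (qcoef y j - w * coord1 x j.+1)).

Lemma horner_pencil N (x : 'I_N -> C) (y : 'I_N.-1 -> C) w z : (0 < N)%N ->
  (pencil x y w).[z] = QN y z - w * PN x z.
Proof.
case: N x y => [//|N] x y _.
rewrite /pencil horner_poly /QN /PN.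
under eq_bigr do rewrite mulrBr mulrBl mulrA.
rewrite sumrB mulr_sumr; congr (_ - _); last by apply: eq_bigr => i _; ring.
rewrite big_ord_recl /= /qcoef /= expr0 !mul1r big_add1 /= big_mkord.
by congr (_ + _); apply: eq_bigr => i _ /=; rewrite mulrA.
Qed.

Lemma coef_Xderiv p i : ('X * p^`())`_i = p`_i *+ i.
Proof. by rewrite coefXM; case: i => [|i] //=; rewrite coef_deriv. Qed.

Lemma pencil_polar n (x : 'I_n -> C) (y : 'I_n.-1 -> C) xi w : (2 <= n)%N ->
  (n.-1)%:R - xi * coord1 y 1 != 0 ->
  (n.-1)%:R *: pencil x y w + xi *: (pencil x y w)^`() - 'X * (pencil x y w)^`() =
  ((n.-1)%:R - xi * coord1 y 1) *: pencil (xtilde x y xi) (ytilde y xi) w.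
Proof.
case: n x y => [//|k] x y k1 /= D0.
apply/polyP => i.
rewrite coefB coefD !coefZ coef_Xderiv coef_deriv /pencil !coef_poly.
have k0 : (0 < k)%N := k1.
case: i => [|i] /=.
  rewrite subr0 mulr1n k0 [(1 < k.+1)%N]k1 (coord1_ord (xtilde x y xi) k0).
  rewrite /xtilde /qcoef /= subn1 /= expr0 expr1.
  by field.
case: (ltnP i.+1 k) => ik; last first.
  rewrite mulr0 ltnS [(i.+2 < _)%N]ltnNge ltnS ik /= mul0rn mulr0 addr0.
  have [ik' | ki] := ltnP i k; last by rewrite mulr0 mul0rn subrr.
  have -> : i.+1 = k by apply/eqP; rewrite eqn_leq ik' ik.
  by rewrite mulr_natl subrr.
have ik' : (i < k.-1)%N by rewrite -ltnS prednK // (leq_trans _ ik).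
have -> : (i.+2 < k.+1)%N by [].
have -> : (i.+1 < k.+1)%N by rewrite ltnS ltnW.
rewrite /qcoef /= (coord1_ord (xtilde x y xi) ik) (coord1_ord (ytilde y xi) ik').
rewrite /xtilde /ytilde /= subSS !natrB ?(ltnW ik) // !exprS.
by field.
Qed.

Lemma horner_pencil_polar n (x : 'I_n -> C) (y : 'I_n.-1 -> C) xi w z :
  (2 <= n)%N -> (n.-1)%:R - xi * coord1 y 1 != 0 ->
  (n.-1)%:R * (pencil x y w).[z] + (xi - z) * (pencil x y w)^`().[z] =
  ((n.-1)%:R - xi * coord1 y 1) * (pencil (xtilde x y xi) (ytilde y xi) w).[z].
Proof.
move=> n2 D0; have := congr1 (horner^~ z) (pencil_polar x w n2 D0).
rewrite /= hornerD hornerN hornerD !hornerZ hornerM hornerX => <-.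
by rewrite mulrBl addrA.
Qed.

Lemma polar_pencil0_at0 N (x : 'I_N -> C) (y : 'I_N.-1 -> C) xi : (2 <= N)%N ->
  (N.-1)%:R * (pencil x y 0).[0] + xi * (pencil x y 0)^`().[0] =
  (N.-1)%:R - xi * coord1 y 1.
Proof.
move=> N2; rewrite !horner_coef0 coef_deriv /pencil !coef_poly (ltnW N2) N2.
by rewrite /qcoef /= !mul0r !subr0 expr0 expr1 !mul1r mulr1n mulN1r mulrN mulr1.
Qed.

End PolarDerivative.

Theorem theorem3p4 (C : numClosedFieldType) (n : nat) (hn : (3 <= n)%N)
  (x : 'I_n -> C) (y : 'I_n.-1 -> C) :
  G1 x y <->
  (forall xi : C, `|xi| <= 1 ->
     ((n.-1)%:R - xi * coord1 y 1 != 0) /\ G1 (xtilde x y xi) (ytilde y xi)).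
Proof.
have n2 : (2 <= n)%N by apply: ltnW.
have n0 : (0 < n)%N by apply: ltnW.
have n1 : (0 < n.-1)%N by rewrite -ltnS prednK.
have sz w : ((size (pencil x y w)).-1 <= n.-1)%N by rewrite -!subn1 leq_sub2r ?size_poly.
split=> [G xi xi1 | H z w z1 w1]; last first.
  have [D0 Gt] := H z z1.
  have := horner_pencil_polar x w z n2 D0; rewrite subrr mul0r addr0 => E.
  have pt0 : (pencil (xtilde x y z) (ytilde y z) w).[z] != 0 by rewrite horner_pencil ?Gt.
  by rewrite -horner_pencil //; apply: contraNneq (mulf_neq0 D0 pt0) => p0; rewrite -E p0 mulr0.
have p0 w : `|w| <= 1 -> forall u, `|u| <= 1 -> (pencil x y w).[u] != 0.
  by move=> w1 u u1; rewrite horner_pencil //; apply: G.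
have disc0 : `|0 : C| <= 1 by rewrite normr0 ler01.
have D0 : (n.-1)%:R - xi * coord1 y 1 != 0.
  have := polar_derivative_neq0 (sz 0) n1 (p0 0 disc0) disc0 xi1.
  by rewrite subr0 polar_pencil0_at0.
split=> // z w z1 w1; rewrite -horner_pencil //.
have := polar_derivative_neq0 (sz w) n1 (p0 w w1) z1 xi1.
by rewrite horner_pencil_polar //; apply: contraNneq => ->; rewrite mulr0.
Qed.
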